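(* Suppose all $x_i$, $r_i$ and $L$ are integers. Then there is an algorithm that computes a minimum-cost feasible order-preserving solution in $O(\textsc{opt}^2\, n)$ time, where $\textsc{opt}$ is the minimum cost of a feasible order-preserving solution.
   Context: Barrier coverage problem: an instance consists of $L>0$ and $n$ sensors with locations $x_i$ and radii $r_i$, indexed so that $x_1\le\cdots\le x_n$. A solution $y\in\mathbb{R}^n$ places sensor $i$ to cover $[y_i-r_i,y_i+r_i]$; it is feasible if these intervals cover $[0,L]$; its cost is $\sum_i|y_i-x_i|$. A set $S$ is active for $y$ if $\bigcup_{i\in S}[y_i-r_i,y_i+r_i]\supseteq[0,L]$. A solution $y$ is order-preserving if it has an active set $S$ such that for all $i,j\in S$ with $i<j$ we have $y_i<y_j$. *)

From Stdlib Require Import Reals ZArith List Lra Lia.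
Open Scope R_scope.

(* An instance: n sensors, indices 0..n-1, locations x i, radii r i, length L. *)

Definition active (L : R) (r : nat -> R) (S : nat -> Prop) (y : nat -> R) : Prop :=
  forall t, 0 <= t <= L -> exists i, S i /\ y i - r i <= t <= y i + r i.

Definition feasible (n : nat) (L : R) (r : nat -> R) (y : nat -> R) : Prop :=
  active L r (fun i => (i < n)%nat) y.

Definition order_preserving (n : nat) (L : R) (r : nat -> R) (y : nat -> R) : Prop :=
  exists S : nat -> Prop,
    (forall i, S i -> (i < n)%nat) /\ active L r S y /\
    (forall i j, S i -> S j -> (i < j)%nat -> y i < y j).

Fixpoint cost_upto (k : nat) (x y : nat -> R) : R :=
  match k with
  | O => 0
  | S k' => cost_upto k' x y + Rabs (y k' - x k')
  end.

Definition cost (n : nat) (x y : nat -> R) : R := cost_upto n x y.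

(* Memory: Z-addressed cells holding integers.  Each instruction costs one step. *)
Inductive instr : Type :=
  | IConst (d : Z) (k : Z)          (* M[d] := k *)
  | IAdd   (d a b : Z)              (* M[d] := M[a] + M[b] *)
  | ISub   (d a b : Z)              (* M[d] := M[a] - M[b] *)
  | ILoad  (d a : Z)                (* M[d] := M[M[a]] *)
  | IStore (a s : Z)                (* M[M[a]] := M[s] *)
  | IJmpPos (a : Z) (t : nat)       (* if M[a] > 0 then pc := t *)
  | IHalt.

Definition mem := Z -> Z.

Definition upd (m : mem) (a v : Z) : mem := fun b => if Z.eqb b a then v else m b.

(* One step: None = halted (IHalt or pc outside program). *)
Definition step (P : list instr) (pc : nat) (m : mem) : option (nat * mem) :=
  match nth_error P pc with
  | None => None
  | Some IHalt => None
  | Some (IConst d k) => Some (S pc, upd m d k)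
  | Some (IAdd d a b) => Some (S pc, upd m d (m a + m b)%Z)
  | Some (ISub d a b) => Some (S pc, upd m d (m a - m b)%Z)
  | Some (ILoad d a) => Some (S pc, upd m d (m (m a)))
  | Some (IStore a s) => Some (S pc, upd m (m a) (m s))
  | Some (IJmpPos a t) => Some (if Z.ltb 0 (m a) then t else S pc, m)
  end.

(* run P fuel pc m = Some m' iff the machine halts after at most fuel steps,
   with final memory m'. *)
Fixpoint run (P : list instr) (fuel : nat) (pc : nat) (m : mem) : option mem :=
  match step P pc m with
  | None => Some m
  | Some (pc', m') =>
      match fuel with
      | O => None
      | S f => run P f pc' m'
      end
  end.

(* Input encoding: M[0] = n, M[1] = L, M[2+i] = x_i, M[2+n+i] = r_i (i < n),
   all other cells 0.  Output: y_i is read from M[2+2n+i] after halting. *)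
Definition init_mem (n : nat) (L : Z) (x r : nat -> Z) : mem :=
  fun a =>
    if Z.eqb a 0 then Z.of_nat n
    else if Z.eqb a 1 then L
    else if andb (Z.leb 2 a) (Z.ltb a (2 + Z.of_nat n)) then x (Z.to_nat (a - 2))
    else if andb (Z.leb (2 + Z.of_nat n) a) (Z.ltb a (2 + 2 * Z.of_nat n))
         then r (Z.to_nat (a - 2 - Z.of_nat n))
    else 0%Z.

Definition output (n : nat) (m : mem) : nat -> R :=
  fun i => IZR (m (2 + 2 * Z.of_nat n + Z.of_nat i)%Z).

From Stdlib Require Import Reals ZArith List Lia Lra Classical.
From Coquelicot Require Import Coquelicot.
Import ListNotations.

(* Integer moves suffice: shifting an order-preserving solution y by a common
   offset th in [0, 1) and rounding every position down gives an integer
   order-preserving solution (L and the radii are integers), and the cost of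
   the rounded solution, averaged over th, is the cost of y; so some rounding
   is no more expensive than y.  Among integer solutions a dynamic program over the
   number i of sensors and the budget c computes the furthest front that can
   be covered; entry (i, c) looks at the O(c) moves of sensor i-1.  The
   first budget K whose column reaches L is therefore the optimal cost, and
   filling the columns 0 .. K takes O(K^2 n) steps of the RAM program, which
   then reads the placement back from the table. *)

Open Scope Z_scope.
Open Scope bool_scope.

Definition reaches (xi ri F d : Z) : bool := (xi + d - ri <=? F) && (F <=? xi + d + ri).

Definition relax (xi ri F d : Z) (best : Z * Z) : Z * Z :=
  if reaches xi ri F d && (fst best <? xi + d + ri) then (xi + d + ri, d) else best.

Fixpoint scan (xi ri : Z) (col : nat -> Z) (c m : nat) : Z * Z :=
  match m with
  | O => (col c, 0)
  | S e => let F := col (c - e)%nat in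
           relax xi ri F (- Z.of_nat e) (relax xi ri F (Z.of_nat e) (scan xi ri col c e))
  end.

(* [front x r i c] is the end F of the longest prefix [0, F] that the
   dynamic program finds covered order-preservingly by the sensors 0 .. i-1
   with integer moves of total cost at most c, and [shift x r i c] is the move
   of sensor i-1 in that cover.  Entry (i+1, c) tries the moves d = e, -e for
   e = 0 .. c, in the order in which the program below tries them, against
   the front of entry (i, c - e). *)Fixpoint dp (x r : nat -> Z) (i : nat) : nat -> Z * Z :=
  match i with
  | O => fun _ => (0, 0)
  | S i' => fun c => scan (x i') (r i') (fun c' => fst (dp x r i' c')) c (S c)
  end.

Definition front x r i c := fst (dp x r i c).
Definition shift x r i c := snd (dp x r i c).

Lemma relax_ge xi ri F d best : fst best <= fst (relax xi ri F d best).
Proof.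
  unfold relax; destruct (reaches _ _ _ _ && _) eqn:E; simpl; [|lia].
  apply andb_prop in E as [_ E]; apply Z.ltb_lt in E; lia.
Qed.

Lemma relax_ge_reach xi ri F d best :
  reaches xi ri F d = true -> xi + d + ri <= fst (relax xi ri F d best).
Proof.
  intros R; unfold relax; rewrite R; simpl.
  destruct (fst best <? xi + d + ri) eqn:E; simpl; [lia|]. apply Z.ltb_ge in E; lia.
Qed.

Lemma relax_cases xi ri F d best :
  relax xi ri F d best = best \/
  (reaches xi ri F d = true /\ relax xi ri F d best = (xi + d + ri, d)).
Proof.
  unfold relax; destruct (reaches xi ri F d); simpl; auto.
  destruct (fst best <? _); auto.
Qed.

Lemma scan_ge xi ri col c m : col c <= fst (scan xi ri col c m).
Proof.
  induction m; simpl; [lia|].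
  eapply Z.le_trans; [|apply relax_ge]. eapply Z.le_trans; [|apply relax_ge]. exact IHm.
Qed.

Lemma scan_ge_reach xi ri col c m e d :
  (e < m)%nat -> (d = Z.of_nat e \/ d = - Z.of_nat e) ->
  reaches xi ri (col (c - e)%nat) d = true -> xi + d + ri <= fst (scan xi ri col c m).
Proof.
  induction m; intros He Hd R; [lia|]; simpl.
  destruct (Nat.eq_dec e m) as [->|Hne].
  - destruct Hd as [->| ->].
    + eapply Z.le_trans; [|apply relax_ge]. now apply relax_ge_reach.
    + now apply relax_ge_reach.
  - eapply Z.le_trans; [|apply relax_ge]. eapply Z.le_trans; [|apply relax_ge].
    apply IHm; auto; lia.
Qed.

Lemma scan_cases xi ri col c m :
  scan xi ri col c m = (col c, 0) \/
  exists e d, (e < m)%nat /\ (d = Z.of_nat e \/ d = - Z.of_nat e) /\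
    reaches xi ri (col (c - e)%nat) d = true /\ scan xi ri col c m = (xi + d + ri, d).
Proof.
  induction m; simpl; auto.
  set (F := col (c - m)%nat); set (st := scan xi ri col c m) in *.
  destruct (relax_cases xi ri F (- Z.of_nat m) (relax xi ri F (Z.of_nat m) st)) as [->|[R ->]];
    [|right; exists m, (- Z.of_nat m); repeat split; auto; lia].
  destruct (relax_cases xi ri F (Z.of_nat m) st) as [->|[R ->]];
    [|right; exists m, (Z.of_nat m); repeat split; auto; lia].
  destruct IHm as [H|(e & d & H1 & H2 & H3 & H4)]; auto.
  right; exists e, d; repeat split; auto.
Qed.

Section Front.

Variables x r : nat -> Z.

Lemma front_le_S i c : front x r i c <= front x r (S i) c.
Proof. apply (scan_ge (x i) (r i) (fun c' => front x r i c')). Qed.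

Lemma front_S_ge_reach i c e d :
  (e <= c)%nat -> (d = Z.of_nat e \/ d = - Z.of_nat e) ->
  reaches (x i) (r i) (front x r i (c - e)) d = true -> x i + d + r i <= front x r (S i) c.
Proof.
  intros. apply (scan_ge_reach (x i) (r i) (fun c' => front x r i c') c (S c) e d); auto; lia.
Qed.

Lemma front_S_witness i c :
  front x r (S i) c <> front x r i c ->
  let d := shift x r (S i) c in
  (Z.abs_nat d <= c)%nat /\ reaches (x i) (r i) (front x r i (c - Z.abs_nat d)) d = true /\
  front x r (S i) c = x i + d + r i.
Proof.
  unfold front, shift.
  change (dp x r (S i) c) with (scan (x i) (r i) (fun c' => fst (dp x r i c')) c (S c)).
  destruct (scan_cases (x i) (r i) (fun c' => fst (dp x r i c')) c (S c))
    as [->|(e & d & H1 & H2 & H3 & ->)]; simpl; [congruence|].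
  intros _. replace (Z.abs_nat d) with e by (destruct H2 as [-> | ->]; lia).
  repeat split; auto; lia.
Qed.

Lemma front_mono i a b : (a <= b)%nat -> front x r i a <= front x r i b.
Proof.
  revert a b; induction i; intros a b Hab; [unfold front; simpl; lia|].
  induction Hab as [|b Hab IH]; [lia|]. eapply Z.le_trans; [exact IH|]. clear a Hab IH.
  destruct (Z.eq_dec (front x r (S i) b) (front x r i b)) as [E|NE].
  - rewrite E. eapply Z.le_trans; [apply (IHi b (S b)); lia|apply front_le_S].
  - destruct (front_S_witness i b NE) as (Hd & R & ->).
    set (d := shift x r (S i) b) in *.
    unfold reaches in R; apply andb_prop in R as [R1 R2];
      apply Z.leb_le in R1; apply Z.leb_le in R2.
    destruct (Z_le_gt_dec (front x r i (S b - Z.abs_nat d)) (x i + d + r i)) as [Hle|Hgt].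
    + apply (front_S_ge_reach i (S b) (Z.abs_nat d) d); [lia|lia|].
      pose proof (IHi (b - Z.abs_nat d)%nat (S b - Z.abs_nat d)%nat ltac:(lia)).
      unfold reaches; apply andb_true_intro; split; apply Z.leb_le; lia.
    + eapply Z.le_trans; [|apply front_le_S].
      pose proof (IHi (S b - Z.abs_nat d)%nat (S b) ltac:(lia)). lia.
Qed.

Lemma front_S_extend i a d :
  x i + d - r i <= front x r i a -> x i + d + r i <= front x r (S i) (a + Z.abs_nat d).
Proof.
  intros H. destruct (Z_le_gt_dec (front x r i a) (x i + d + r i)) as [Hle|Hgt].
  - apply (front_S_ge_reach i (a + Z.abs_nat d) (Z.abs_nat d) d); [lia|lia|].
    replace (a + Z.abs_nat d - Z.abs_nat d)%nat with a by lia.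
    unfold reaches; apply andb_true_intro; split; apply Z.leb_le; auto.
  - eapply Z.le_trans; [|apply front_le_S].
    pose proof (front_mono i a (a + Z.abs_nat d) ltac:(lia)). lia.
Qed.

End Front.

Fixpoint place (x r : nat -> Z) (i c : nat) : nat -> Z :=
  match i with
  | O => x
  | S i' =>
    if Z.eq_dec (front x r (S i') c) (front x r i' c) then place x r i' c
    else fun j => if Nat.eq_dec j i' then x i' + shift x r (S i') c
                  else place x r i' (c - Z.abs_nat (shift x r (S i') c)) j
  end.

Lemma place_ge x r i c j : (i <= j)%nat -> place x r i c j = x j.
Proof.
  revert c; induction i; intros c H; simpl; auto.
  destruct (Z.eq_dec _ _); [apply IHi; lia|].
  destruct (Nat.eq_dec j i); [lia|apply IHi; lia].
Qed.

Lemma cost_upto_ext k (x y y' : nat -> R) :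
  (forall j, (j < k)%nat -> y j = y' j) -> cost_upto k x y = cost_upto k x y'.
Proof.
  induction k; intros H; simpl; auto.
  rewrite IHk by (intros; apply H; lia). rewrite H by lia. reflexivity.
Qed.

Open Scope R_scope.

(* The disjunct for the empty cover is the base case: [active 0 r S y] would
   already need a sensor. *)
Definition covers_prefix (n : nat) (r y : nat -> R) (F : R) : Prop :=
  exists S : nat -> Prop, (forall j, S j -> (j < n)%nat) /\
    (forall j, S j -> y j + r j <= F) /\
    (forall j k, S j -> S k -> (j < k)%nat -> y j < y k) /\
    ((forall j, ~ S j) /\ F = 0 \/ active F r S y).

Lemma covers_prefix_S n r y F : covers_prefix n r y F -> covers_prefix (S n) r y F.
Proof. intros (S & HS & H). exists S. split; [intros j Hj; specialize (HS j Hj); lia|exact H]. Qed.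

(* Sensors of S that would sit to the right of the new sensor end before F,
   so they can be dropped without uncovering anything. *)
Lemma covers_prefix_extend n r y y' F p :
  covers_prefix n r y F -> (forall j, (j < n)%nat -> y' j = y j) -> y' n = p ->
  p - r n <= F <= p + r n -> covers_prefix (S n) r y' (p + r n).
Proof.
  intros (S & HS & Hend & Hinc & Hcov) Ey Ep HF.
  exists (fun j => (S j /\ y' j < p) \/ j = n). repeat split.
  - intros j [[Sj _]| ->]; [specialize (HS j Sj)|]; lia.
  - intros j [[Sj _]| ->]; [|lra]. specialize (Hend j Sj). rewrite Ey by auto. lra.
  - intros j k [[Sj Hj]| ->] [[Sk Hk]| ->] Hjk; try lia.
    + rewrite !Ey by auto. auto.
    + rewrite Ep. exact Hj.
    + specialize (HS k Sk). lia.
  - right. intros t Ht.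
    destruct (Rle_dec t F) as [Hle|Hgt]; [|exists n; split; auto; lra].
    destruct Hcov as [[_ HF0]|Hcov]; [exists n; split; auto; lra|].
    destruct (Hcov t ltac:(lra)) as (j & Sj & Hjt).
    pose proof (HS j Sj) as Hjn. rewrite <- Ey in Hjt by auto.
    destruct (Rlt_dec (y' j) p) as [Hlt|Hnlt]; [exists j; split; auto|].
    exists n. split; auto. specialize (Hend j Sj). rewrite <- Ey in Hend by auto. lra.
Qed.

Section Place.

Variables x r : nat -> Z.

Let xR j := IZR (x j).
Let rR j := IZR (r j).

Lemma place_S_unused i c :
  front x r (S i) c = front x r i c -> place x r (S i) c = place x r i c.
Proof. intros E; simpl; destruct (Z.eq_dec _ _); congruence. Qed.

Lemma place_S_used i c j :
  front x r (S i) c <> front x r i c ->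
  place x r (S i) c j =
  if Nat.eq_dec j i then (x i + shift x r (S i) c)%Z
  else place x r i (c - Z.abs_nat (shift x r (S i) c)) j.
Proof. intros NE; simpl; destruct (Z.eq_dec _ _); congruence. Qed.

Lemma place_cost i c :
  cost_upto i xR (fun j => IZR (place x r i c j)) <= INR c.
Proof.
  revert c; induction i; intros c; cbn [cost_upto]; [apply pos_INR|].
  destruct (Z.eq_dec (front x r (S i) c) (front x r i c)) as [E|NE].
  - rewrite (place_S_unused i c E), (place_ge x r i c i) by lia.
    replace (IZR (x i) - xR i) with 0 by (unfold xR; ring).
    rewrite Rabs_R0. specialize (IHi c). lra.
  - destruct (front_S_witness x r i c NE) as (Hd & _ & _).
    set (d := shift x r (S i) c) in *.
    rewrite (cost_upto_ext i _ _ (fun j => IZR (place x r i (c - Z.abs_nat d) j)))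
      by (intros j Hj; rewrite place_S_used by exact NE; destruct (Nat.eq_dec j i); [lia|auto]).
    rewrite place_S_used by exact NE. destruct (Nat.eq_dec i i); [|congruence]. fold d.
    change (xR i) with (IZR (x i)); rewrite <- minus_IZR. replace (x i + d - x i)%Z with d by ring.
    rewrite <- abs_IZR, <- (Nat.sub_add (Z.abs_nat d) c Hd) at 1.
    rewrite plus_INR, (INR_IZR_INZ (Z.abs_nat d)), Zabs2Nat.id_abs.
    specialize (IHi (c - Z.abs_nat d)%nat). lra.
Qed.

Lemma place_covers i c :
  covers_prefix i rR (fun j => IZR (place x r i c j)) (IZR (front x r i c)).
Proof.
  revert c; induction i; intros c.
  - exists (fun _ => False). do 3 (split; [tauto|]). left; split; [tauto|reflexivity].
  - destruct (Z.eq_dec (front x r (S i) c) (front x r i c)) as [E|NE].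
    + rewrite place_S_unused, E by exact E. apply covers_prefix_S, IHi.
    + destruct (front_S_witness x r i c NE) as (_ & R & ->).
      set (d := shift x r (S i) c) in *.
      unfold reaches in R; apply andb_prop in R as [R1 R2];
        apply Z.leb_le in R1; apply Z.leb_le in R2.
      rewrite plus_IZR.
      apply (covers_prefix_extend i rR _ _ _ _ (IHi (c - Z.abs_nat d)%nat)).
      * intros j Hj. rewrite place_S_used by exact NE. destruct (Nat.eq_dec j i); [lia|auto].
      * rewrite place_S_used by exact NE. destruct (Nat.eq_dec i i); [reflexivity|congruence].
      * unfold rR; split; [rewrite <- minus_IZR|rewrite <- plus_IZR]; apply IZR_le; lia.
Qed.

End Place.

Lemma Int_part_eq z t : IZR z <= t < IZR z + 1 -> Int_part t = z.
Proof. intros H. symmetry. apply Int_part_spec. lra. Qed.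

Lemma Int_part_lb t : IZR (Int_part t) <= t.
Proof. apply base_Int_part. Qed.

Lemma Int_part_ub t : t < IZR (Int_part t) + 1.
Proof. pose proof (base_Int_part t). lra. Qed.

Lemma Int_part_le_compat t s : t <= s -> (Int_part t <= Int_part s)%Z.
Proof.
  intros H. apply Z.lt_succ_r, lt_IZR. rewrite succ_IZR.
  pose proof (Int_part_lb t). pose proof (Int_part_ub s). lra.
Qed.

Lemma Int_part_plus_IZR t z : Int_part (t + IZR z) = (Int_part t + z)%Z.
Proof.
  apply Int_part_eq. rewrite plus_IZR. pose proof (Int_part_lb t). pose proof (Int_part_ub t). lra.
Qed.

Fixpoint rounded_cost (x : nat -> Z) (y : nat -> R) (th : R) (i : nat) : nat :=
  match i with
  | O => O
  | S i' => (rounded_cost x y th i' + Z.abs_nat (Int_part (y i' + th) - x i'))%nat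
  end.

Lemma finite_gap (P : nat -> Prop) (l : nat -> R) (Phi : R) m :
  exists eps, 0 < eps /\ forall j, (j < m)%nat -> P j -> l j > Phi -> l j >= Phi + eps.
Proof.
  induction m as [|m (e & He & H)]; [exists 1; split; [lra|intros; lia]|].
  destruct (classic (P m /\ l m > Phi)) as [[Pm Hm]|N].
  - exists (Rmin e (l m - Phi)). split; [apply Rmin_pos; lra|].
    intros j Hj Pj Hl. pose proof (Rmin_l e (l m - Phi)). pose proof (Rmin_r e (l m - Phi)).
    destruct (Nat.eq_dec j m) as [->|Hne]; [lra|].
    pose proof (H j ltac:(lia) Pj Hl). lra.
  - exists e. split; auto. intros j Hj Pj Hl.
    destruct (Nat.eq_dec j m) as [->|Hne]; [tauto|]. apply H; auto; lia.
Qed.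

Lemma active_unstraddled_ge n (L Phi : R) r y (S : nat -> Prop) :
  0 <= Phi -> (forall i, S i -> (i < n)%nat) -> active L r S y ->
  (forall j, (j < n)%nat -> S j -> y j - r j <= Phi -> y j + r j <= Phi) -> L <= Phi.
Proof.
  intros H0 HS Hact Hstop. apply Rnot_lt_le. intros Hlt.
  destruct (finite_gap S (fun j => y j - r j) Phi n) as (e & He & Hgap).
  set (h := Rmin e (L - Phi)).
  assert (0 < h) by (apply Rmin_pos; lra).
  pose proof (Rmin_l e (L - Phi)). pose proof (Rmin_r e (L - Phi)).
  destruct (Hact (Phi + h / 2) ltac:(unfold h in *; lra)) as (j & Sj & Hj).
  pose proof (HS j Sj).
  destruct (Rle_dec (y j - r j) Phi) as [Hle|Hgt].
  - pose proof (Hstop j ltac:(auto) Sj Hle). unfold h in *; lra.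
  - pose proof (Hgap j ltac:(auto) Sj ltac:(lra)). unfold h in *; lra.
Qed.

Section Rounding.

Variables (x r : nat -> Z) (y : nat -> R) (S : nat -> Prop) (th : R).
Hypothesis Hth : 0 <= th < 1.
Hypothesis Hinc : forall i j, S i -> S j -> (i < j)%nat -> y i < y j.

Let rR j := IZR (r j).

(* Phi is the end of the prefix covered by the sensors of S below i; the
   rounded placement of those sensors keeps up with it. *)
Lemma rounded_front_ge i :
  exists Phi, 0 <= Phi /\ (Int_part (Phi + th) <= front x r i (rounded_cost x y th i))%Z /\
    (forall j, (j < i)%nat -> S j -> y j - rR j <= Phi -> y j + rR j <= Phi).
Proof.
  induction i as [|i (Phi & H0 & Hfront & Hstop)].
  - exists 0. split; [lra|]. split; [|intros; lia].
    rewrite Rplus_0_l, (Int_part_eq 0 th) by (simpl; lra). unfold front; simpl; lia.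
  - set (k := rounded_cost x y th i) in *.
    destruct (classic (S i /\ y i - rR i <= Phi)) as [[Si Hl]|NU].
    + exists (Rmax Phi (y i + rR i)). split; [eapply Rle_trans; [exact H0|apply Rmax_l]|]. split.
      * set (d := (Int_part (y i + th) - x i)%Z). cbn [rounded_cost]. fold k d.
        assert (Hreach : (x i + d - r i <= front x r i k)%Z).
        { unfold d. replace (x i + (Int_part (y i + th) - x i) - r i)%Z
            with (Int_part (y i + th) + - r i)%Z by ring.
          rewrite <- Int_part_plus_IZR, opp_IZR. eapply Z.le_trans; [|exact Hfront].
          apply Int_part_le_compat. unfold rR in Hl. lra. }
        assert (Hend : (x i + d + r i)%Z = Int_part (y i + rR i + th)).
        { unfold d, rR. replace (y i + IZR (r i) + th) with ((y i + th) + IZR (r i)) by ring.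
          rewrite Int_part_plus_IZR. ring. }
        pose proof (front_S_extend x r i k d Hreach).
        pose proof (front_le_S x r i (k + Z.abs_nat d)).
        pose proof (front_mono x r i k (k + Z.abs_nat d) ltac:(lia)).
        unfold Rmax. destruct (Rle_dec Phi (y i + rR i)); [rewrite <- Hend|]; lia.
      * intros j Hj Sj Hlj. destruct (Nat.eq_dec j i) as [->|Hne]; [apply Rmax_r|].
        destruct (Rle_dec (y j - rR j) Phi) as [Hle|Hgt].
        -- eapply Rle_trans; [apply Hstop; auto; lia|apply Rmax_l].
        -- assert (y j < y i) by (apply Hinc; auto; lia).
           eapply Rle_trans; [|apply Rmax_r]. lra.
    + exists Phi. split; [exact H0|]. split.
      * cbn [rounded_cost]. fold k. eapply Z.le_trans; [exact Hfront|].
        eapply Z.le_trans; [|apply front_le_S]. apply front_mono. lia.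
      * intros j Hj Sj Hlj. destruct (Nat.eq_dec j i) as [->|Hne]; [tauto|]. apply Hstop; auto; lia.
Qed.

Lemma rounded_front_reaches n (L : Z) :
  (forall i, S i -> (i < n)%nat) -> active (IZR L) rR S y ->
  (L <= front x r n (rounded_cost x y th n))%Z.
Proof.
  intros HSn Hact. destruct (rounded_front_ge n) as (Phi & H0 & Hfront & Hstop).
  pose proof (active_unstraddled_ge n (IZR L) Phi rR y S H0 HSn Hact Hstop).
  eapply Z.le_trans; [|exact Hfront].
  replace L with (Int_part (IZR L + th)) by
    (rewrite Rplus_comm, Int_part_plus_IZR, (Int_part_eq 0 th) by (simpl; lra); ring).
  apply Int_part_le_compat. lra.
Qed.

End Rounding.

Lemma is_RInt_floor_shift_dist (y0 : R) (x0 : Z) :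
  is_RInt (fun th => Rabs (IZR (Int_part (y0 + th)) - IZR x0)) 0 1 (Rabs (y0 - IZR x0)).
Proof.
  set (z := Int_part y0). set (a := 1 - (y0 - IZR z)).
  pose proof (Int_part_lb y0) as Hz1. pose proof (Int_part_ub y0) as Hz2. fold z in Hz1, Hz2.
  assert (Ha : 0 < a <= 1) by (unfold a; lra).
  assert (I1 : is_RInt (fun th => Rabs (IZR (Int_part (y0 + th)) - IZR x0)) 0 a
                 (scal (a - 0) (Rabs (IZR z - IZR x0)))).
  { eapply is_RInt_ext; [|apply (@is_RInt_const R_NormedModule)]. intros t Ht.
    rewrite Rmin_left in Ht by lra. rewrite Rmax_right in Ht by lra.
    rewrite (Int_part_eq z) by (unfold a in Ht; lra). reflexivity. }
  assert (I2 : is_RInt (fun th => Rabs (IZR (Int_part (y0 + th)) - IZR x0)) a 1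
                 (scal (1 - a) (Rabs (IZR (z + 1) - IZR x0)))).
  { eapply is_RInt_ext; [|apply (@is_RInt_const R_NormedModule)]. intros t Ht.
    rewrite Rmin_left in Ht by lra. rewrite Rmax_right in Ht by lra.
    rewrite (Int_part_eq (z + 1)) by (rewrite plus_IZR; unfold a in Ht; lra). reflexivity. }
  replace (Rabs (y0 - IZR x0))
    with ((a - 0) * Rabs (IZR z - IZR x0) + (1 - a) * Rabs (IZR (z + 1) - IZR x0)).
  { exact (is_RInt_Chasles _ _ _ _ _ _ I1 I2). }
  rewrite plus_IZR. unfold a.
  destruct (Z_le_gt_dec x0 z) as [H|H].
  - apply IZR_le in H. rewrite !Rabs_right by lra. ring.
  - assert (IZR z + 1 <= IZR x0) by (rewrite <- plus_IZR; apply IZR_le; lia).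
    rewrite !Rabs_left1 by lra. ring.
Qed.

Lemma is_RInt_rounded_cost (x : nat -> Z) (y : nat -> R) n :
  is_RInt (fun th => INR (rounded_cost x y th n)) 0 1 (cost_upto n (fun j => IZR (x j)) y).
Proof.
  induction n; cbn [rounded_cost cost_upto].
  - pose proof (@is_RInt_const R_NormedModule 0 1 0) as H.
    change (scal (1 - 0) 0) with ((1 - 0) * 0) in H. rewrite Rmult_0_r in H. exact H.
  - eapply is_RInt_ext;
      [|exact (is_RInt_plus _ _ _ _ _ _ IHn (is_RInt_floor_shift_dist (y n) (x n)))].
    intros th _.
    rewrite plus_INR, (INR_IZR_INZ (Z.abs_nat _)), Zabs2Nat.id_abs, abs_IZR, minus_IZR.
    reflexivity.
Qed.

(* The cost of y is the average of the rounded costs over th in [0,1), so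
   some rounding is no more expensive than y. *)
Lemma exists_cheap_rounding (x : nat -> Z) (y : nat -> R) n :
  exists th, 0 <= th < 1 /\ INR (rounded_cost x y th n) <= cost_upto n (fun j => IZR (x j)) y.
Proof.
  apply NNPP. intros N.
  set (C := cost_upto n (fun j => IZR (x j)) y).
  set (M := IZR (Int_part C) + 1).
  assert (HM : forall th, 0 < th < 1 -> M <= INR (rounded_cost x y th n)).
  { intros th Hth. destruct (Rle_dec (INR (rounded_cost x y th n)) C) as [Hle|Hgt].
    - exfalso. apply N. exists th. split; [lra|exact Hle].
    - apply Rnot_le_lt in Hgt. rewrite INR_IZR_INZ in *. unfold M.
      pose proof (Int_part_lb C). rewrite <- succ_IZR. apply IZR_le, Zlt_le_succ, lt_IZR. lra. }
  assert (Hle : RInt (fun _ => M) 0 1 <= RInt (fun th => INR (rounded_cost x y th n)) 0 1).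
  { apply RInt_le; [lra|apply ex_RInt_const|eexists; apply is_RInt_rounded_cost|].
    intros; apply HM; lra. }
  rewrite (is_RInt_unique _ _ _ _ (is_RInt_rounded_cost x y n)), RInt_const in Hle.
  change (scal (1 - 0) M) with ((1 - 0) * M) in Hle. pose proof (Int_part_ub C). unfold M in Hle.
  fold C in Hle. lra.
Qed.

Section Solutions.

Variables (x r : nat -> Z) (n : nat) (L : Z).
Hypothesis HL : (0 < L)%Z.

Let xR j := IZR (x j).
Let rR j := IZR (r j).

Lemma order_preserving_front_reaches y :
  order_preserving n (IZR L) rR y ->
  exists k, INR k <= cost n xR y /\ (L <= front x r n k)%Z.
Proof.
  intros (S & HS & Hact & Hinc).
  destruct (exists_cheap_rounding x y n) as (th & Hth & Hk).
  exists (rounded_cost x y th n). split; [exact Hk|].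
  exact (rounded_front_reaches x r y S th Hth Hinc n L HS Hact).
Qed.

Lemma budget_le_cost K y :
  (forall K', (K' < K)%nat -> (front x r n K' < L)%Z) ->
  order_preserving n (IZR L) rR y -> INR K <= cost n xR y.
Proof.
  intros Hmin Hy. destruct (order_preserving_front_reaches y Hy) as (k & Hk & HLk).
  assert (HKk : (K <= k)%nat)
    by (destruct (Nat.le_gt_cases K k) as [|Hlt]; [auto|specialize (Hmin k Hlt); lia]).
  apply le_INR in HKk. lra.
Qed.

Lemma place_solution c :
  (L <= front x r n c)%Z ->
  let y := fun j => IZR (place x r n c j) in
  feasible n (IZR L) rR y /\ order_preserving n (IZR L) rR y /\ cost n xR y <= INR c.
Proof.
  intros HF y. destruct (place_covers x r n c) as (S & HS & _ & Hinc & Hcov).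
  apply IZR_le in HF. apply IZR_lt in HL.
  destruct Hcov as [[_ E]|Hcov]; [lra|].
  split; [|split; [|apply place_cost]].
  - intros t Ht. destruct (Hcov t ltac:(lra)) as (j & Sj & Hj). exists j. auto.
  - exists S. do 2 (split; auto). intros t Ht. apply Hcov. lra.
Qed.

Lemma feasible_pos y : feasible n (IZR L) rR y -> (1 <= n)%nat.
Proof.
  intros H. apply IZR_lt in HL. destruct (H 0 ltac:(lra)) as (i & Hi & _). lia.
Qed.

End Solutions.

Lemma feasible_ext n L (r y y' : nat -> R) :
  (forall j, (j < n)%nat -> y j = y' j) -> feasible n L r y -> feasible n L r y'.
Proof.
  intros E H t Ht. destruct (H t Ht) as (i & Hi & Hc). exists i. rewrite <- E by auto. auto.
Qed.

Lemma order_preserving_ext n L (r y y' : nat -> R) :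
  (forall j, (j < n)%nat -> y j = y' j) -> order_preserving n L r y -> order_preserving n L r y'.
Proof.
  intros E (S & HS & Ha & Hi). exists S. split; auto. split.
  - intros t Ht. destruct (Ha t Ht) as (i & Si & Hc). exists i. rewrite <- E by auto. auto.
  - intros i j Si Sj Hij. rewrite <- !E by auto. auto.
Qed.

Open Scope Z_scope.

(* Registers are the cells at negative addresses.  The input occupies cells
   0 .. 2n+1 and the output cells 2n+2 .. 3n+1; from [table_base n] on, the
   program stores the table column by column: the entry (c, i), for the
   budget c and the sensor count i <= n, is the pair of cells
   [table_base n + 2 (c (n+1) + i)] and the next one, holding
   [front x r i c] and [shift x r i c].  Columns are filled for c = 0, 1, ...
   until [front x r n c >= L]; then the placement is read back from the table. *)
Notation rN := (-1).
Notation rL := (-2).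
Notation rStride := (-3).
Notation rBudget := (-4).
Notation rCol := (-5).
Notation rRow := (-6).
Notation rLocAddr := (-7).
Notation rRadAddr := (-8).
Notation rLoc := (-9).
Notation rRad := (-10).
Notation rBest := (-11).
Notation rBestShift := (-12).
Notation rPtr := (-13).
Notation rDist := (-14).
Notation rCount := (-15).
Notation rFront := (-16).
Notation rPos := (-17).
Notation rLeft := (-18).
Notation rRight := (-19).
Notation rTmp := (-20).
Notation rOne := (-21).
Notation rShift := (-22).
Notation rPlus := (-23).
Notation rBack := (-24).
Notation rOutAddr := (-25).
Notation rAddr := (-26).
Notation rVal := (-27).
Notation rZero := (-28).
Notation rCell := (-29).

(* The comments give the address of the first instruction of each line. *)
Definition prog : list instr := [
 (* 0: setup *)
   IConst rTmp 0; ILoad rN rTmp; IConst rTmp 1; ILoad rL rTmp; IConst rOne 1;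
 (* 5 *)
   IConst rZero 0; IAdd rStride rN rN; IAdd rStride rStride rOne; IAdd rStride rStride rOne;
   IAdd rCol rStride rN;
 (* 10 *)
   IConst rBudget 0;
 (* 11: next column *)
   IConst rRow 1; IAdd rLocAddr rOne rOne; IAdd rRadAddr rLocAddr rN; IAdd rCell rCol rZero;
 (* 15: next row *)
   ISub rTmp rRow rN; IJmpPos rTmp 58; ILoad rLoc rLocAddr; ILoad rRad rRadAddr; ILoad rBest rCell;
 (* 20 *)
   IConst rBestShift 0; IAdd rPtr rCell rZero; IConst rDist 0; IAdd rCount rBudget rOne;
 (* 24: loop over |d| *)
   IJmpPos rCount 26; IJmpPos rOne 49;
 (* 26 *)
   ILoad rFront rPtr; IAdd rShift rDist rZero; IConst rPlus 1;
 (* 29: relax with shift d *)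
   IAdd rPos rLoc rShift; ISub rLeft rPos rRad; IAdd rRight rPos rRad; ISub rTmp rLeft rFront;
   IJmpPos rTmp 41;
 (* 34 *)
   ISub rTmp rFront rRight; IJmpPos rTmp 41; ISub rTmp rRight rBest; IJmpPos rTmp 39;
   IJmpPos rOne 41;
 (* 39 *)
   IAdd rBest rRight rZero; IAdd rBestShift rShift rZero;
 (* 41 *)
   IJmpPos rPlus 46; ISub rPtr rPtr rStride; IAdd rDist rDist rOne; ISub rCount rCount rOne;
   IJmpPos rOne 24;
 (* 46: retry with -d *)
   ISub rShift rZero rDist; IConst rPlus 0; IJmpPos rOne 29;
 (* 49: store the entry *)
   IAdd rCell rCell rOne; IAdd rCell rCell rOne; IStore rCell rBest; IAdd rAddr rCell rOne;
   IStore rAddr rBestShift;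
 (* 54 *)
   IAdd rRow rRow rOne; IAdd rLocAddr rLocAddr rOne; IAdd rRadAddr rRadAddr rOne; IJmpPos rOne 15;
 (* 58: column done *)
   ILoad rVal rCell; ISub rTmp rL rVal; IJmpPos rTmp 62; IJmpPos rOne 65;
 (* 62 *)
   IAdd rBudget rBudget rOne; IAdd rCol rCol rStride; IJmpPos rOne 11;
 (* 65: read back *)
   IAdd rBack rCell rZero; IAdd rRow rN rZero; IAdd rOutAddr rStride rN;
   ISub rOutAddr rOutAddr rOne; IAdd rLocAddr rOne rN;
 (* 70 *)
   IJmpPos rRow 72; IHalt;
 (* 72 *)
   ILoad rVal rBack; ISub rAddr rBack rOne; ISub rAddr rAddr rOne; ILoad rTmp rAddr;
   ISub rTmp rVal rTmp; IJmpPos rTmp 80;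
 (* 78: sensor unused *)
   ILoad rPos rLocAddr; IJmpPos rOne 91;
 (* 80: sensor used *)
   IAdd rAddr rBack rOne; ILoad rShift rAddr; ILoad rPos rLocAddr; IAdd rPos rPos rShift;
   IJmpPos rShift 86; ISub rShift rZero rShift;
 (* 86: move back |d| columns *)
   IJmpPos rShift 88; IJmpPos rOne 91; ISub rBack rBack rStride; ISub rShift rShift rOne;
   IJmpPos rOne 86;
 (* 91: write the output *)
   IStore rOutAddr rPos; ISub rBack rBack rOne; ISub rBack rBack rOne;
   ISub rOutAddr rOutAddr rOne; ISub rLocAddr rLocAddr rOne;
 (* 96 *)
   ISub rRow rRow rOne; IJmpPos rOne 70 ].

Inductive exec : nat -> nat -> mem -> nat -> mem -> Prop :=
| exec_done pc m : exec 0 pc m pc m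
| exec_step k pc m pc1 m1 pc2 m2 :
    step prog pc m = Some (pc1, m1) -> exec k pc1 m1 pc2 m2 -> exec (S k) pc m pc2 m2.

Lemma exec_trans k1 k2 a ma b mb c mc :
  exec k1 a ma b mb -> exec k2 b mb c mc -> exec (k1 + k2) a ma c mc.
Proof. induction 1; intros; simpl; auto. econstructor; eauto. Qed.

Lemma exec_run k pc m pc' m' f :
  exec k pc m pc' m' -> step prog pc' m' = None -> (k <= f)%nat -> run prog f pc m = Some m'.
Proof.
  intros H. revert f. induction H; intros f Hn Hf.
  - destruct f; simpl; rewrite Hn; auto.
  - destruct f; [lia|]. simpl. rewrite H. apply IHexec; auto; lia.
Qed.

Lemma upd_eq m d v a : a = d -> upd m d v a = v.
Proof. intros ->. unfold upd. rewrite Z.eqb_refl. reflexivity. Qed.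

Lemma upd_ne m d v a : a <> d -> upd m d v a = m a.
Proof. intros H. unfold upd. destruct (Z.eqb_spec a d); congruence. Qed.

Lemma step_jump_taken pc a t m :
  nth_error prog pc = Some (IJmpPos a t) -> 0 < m a -> step prog pc m = Some (t, m).
Proof. intros H H2. unfold step. rewrite H. destruct (Z.ltb_spec 0 (m a)); auto; lia. Qed.

Lemma step_jump_not_taken pc a t m :
  nth_error prog pc = Some (IJmpPos a t) -> m a <= 0 -> step prog pc m = Some (S pc, m).
Proof. intros H H2. unfold step. rewrite H. destruct (Z.ltb_spec 0 (m a)); auto; lia. Qed.

Ltac simpl_upd := repeat match goal with
  | |- context [upd ?m ?d ?v ?a] =>
      first [rewrite (upd_eq m d v a) by (reflexivity || lia) | rewrite (upd_ne m d v a) by lia]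
  end.

Ltac step1 := eapply exec_step; [reflexivity|].
Ltac jump := eapply exec_step; [eapply step_jump_taken; [reflexivity|simpl_upd; lia]|].
Ltac no_jump := eapply exec_step; [eapply step_jump_not_taken; [reflexivity|simpl_upd; lia]|].

Lemma exec_relax m : m rZero = 0 -> m rOne = 1 ->
  exists k m', (k <= 11)%nat /\ exec k 29 m 41 m' /\
    (m' rBest, m' rBestShift) =
      relax (m rLoc) (m rRad) (m rFront) (m rShift) (m rBest, m rBestShift) /\
    (forall a, a <> rPos -> a <> rLeft -> a <> rRight -> a <> rTmp -> a <> rBest ->
       a <> rBestShift -> m' a = m a).
Proof.
  intros HZ HONE. unfold relax, reaches. simpl.
  destruct (Z.leb_spec (m rLoc + m rShift - m rRad) (m rFront)) as [H1|H1]; simpl.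
  2:{ do 2 eexists. split; [|split]. 2:{ step1; step1; step1; step1; jump. apply exec_done. }
      lia. split; simpl_upd; [reflexivity|intros a; intros; simpl_upd; reflexivity]. }
  destruct (Z.leb_spec (m rFront) (m rLoc + m rShift + m rRad)) as [H2|H2]; simpl.
  2:{ do 2 eexists. split; [|split].
      2:{ step1; step1; step1; step1; no_jump; step1; jump. apply exec_done. }
      lia. split; simpl_upd; [reflexivity|intros a; intros; simpl_upd; reflexivity]. }
  destruct (Z.ltb_spec (m rBest) (m rLoc + m rShift + m rRad)) as [H3|H3]; simpl.
  - do 2 eexists. split; [|split].
    2:{ step1; step1; step1; step1; no_jump; step1; no_jump; step1; jump; step1; step1.
        apply exec_done. }
    lia. split; simpl_upd; [rewrite HZ, !Z.add_0_r; reflexivity|].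
    intros a; intros; simpl_upd; reflexivity.
  - do 2 eexists. split; [|split].
    2:{ step1; step1; step1; step1; no_jump; step1; no_jump; step1; no_jump; jump.
        apply exec_done. }
    lia. split; simpl_upd; [reflexivity|intros a; intros; simpl_upd; reflexivity].
Qed.

Definition width (n : nat) : Z := Z.of_nat n + 1.
Definition table_base (n : nat) : Z := 3 * Z.of_nat n + 2.

Definition table_front n x r (j : Z) : Z :=
  front x r (Z.to_nat (j mod width n)) (Z.to_nat (j / width n)).
Definition table_shift n x r (j : Z) : Z :=
  shift x r (Z.to_nat (j mod width n)) (Z.to_nat (j / width n)).

Lemma table_index_decode n c i : (i <= n)%nat ->
  (Z.of_nat c * width n + Z.of_nat i) mod width n = Z.of_nat i /\
  (Z.of_nat c * width n + Z.of_nat i) / width n = Z.of_nat c.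
Proof.
  intros H. unfold width. split.
  - rewrite Z.add_comm, Z.mod_add by lia. apply Z.mod_small. lia.
  - rewrite Z.add_comm, Z.div_add by lia. rewrite Z.div_small by lia. lia.
Qed.

Lemma table_front_index n x r c i : (i <= n)%nat ->
  table_front n x r (Z.of_nat c * width n + Z.of_nat i) = front x r i c.
Proof.
  intros H. unfold table_front. destruct (table_index_decode n c i H) as [-> ->].
  rewrite !Nat2Z.id. reflexivity.
Qed.

Lemma table_shift_index n x r c i : (i <= n)%nat ->
  table_shift n x r (Z.of_nat c * width n + Z.of_nat i) = shift x r i c.
Proof.
  intros H. unfold table_shift. destruct (table_index_decode n c i H) as [-> ->].
  rewrite !Nat2Z.id. reflexivity.
Qed.

Lemma init_mem_x n L x r i : (1 <= i <= n)%nat -> init_mem n L x r (1 + Z.of_nat i) = x (i - 1)%nat.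
Proof.
  intros H. unfold init_mem.
  destruct (Z.eqb_spec (1 + Z.of_nat i) 0); [lia|].
  destruct (Z.eqb_spec (1 + Z.of_nat i) 1); [lia|].
  destruct (Z.leb_spec 2 (1 + Z.of_nat i)); [|lia].
  destruct (Z.ltb_spec (1 + Z.of_nat i) (2 + Z.of_nat n)); [|lia].
  cbn [andb]. f_equal. lia.
Qed.

Lemma init_mem_r n L x r i : (1 <= i <= n)%nat ->
  init_mem n L x r (1 + Z.of_nat n + Z.of_nat i) = r (i - 1)%nat.
Proof.
  intros H. unfold init_mem.
  destruct (Z.eqb_spec (1 + Z.of_nat n + Z.of_nat i) 0); [lia|].
  destruct (Z.eqb_spec (1 + Z.of_nat n + Z.of_nat i) 1); [lia|].
  destruct (Z.leb_spec 2 (1 + Z.of_nat n + Z.of_nat i)); [|lia].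
  destruct (Z.ltb_spec (1 + Z.of_nat n + Z.of_nat i) (2 + Z.of_nat n)); [lia|].
  destruct (Z.leb_spec (2 + Z.of_nat n) (1 + Z.of_nat n + Z.of_nat i)); [|lia].
  destruct (Z.ltb_spec (1 + Z.of_nat n + Z.of_nat i) (2 + 2 * Z.of_nat n)); [|lia].
  cbn [andb]. f_equal. lia.
Qed.

Lemma init_mem_high n L x r a : 2 + 2 * Z.of_nat n <= a -> init_mem n L x r a = 0.
Proof.
  intros H. unfold init_mem.
  destruct (Z.eqb_spec a 0); [lia|]. destruct (Z.eqb_spec a 1); [lia|].
  destruct (Z.leb_spec 2 a); destruct (Z.ltb_spec a (2 + Z.of_nat n)); try lia; cbn [andb].
  destruct (Z.leb_spec (2 + Z.of_nat n) a); destruct (Z.ltb_spec a (2 + 2 * Z.of_nat n));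
    try lia; reflexivity.
Qed.

Lemma exec_shift_load m : 0 < m rCount -> m rZero = 0 ->
  exists m1, exec 4 24 m 29 m1 /\
    m1 rFront = m (m rPtr) /\ m1 rShift = m rDist /\ m1 rPlus = 1 /\
    (forall a, a <> rFront -> a <> rShift -> a <> rPlus -> m1 a = m a).
Proof.
  intros H HZ. eexists. split; [jump; step1; step1; step1; apply exec_done|].
  split; [|split; [|split]]; simpl_upd; try reflexivity.
  - rewrite HZ; ring.
  - intros a; intros; simpl_upd; reflexivity.
Qed.

Lemma exec_shift_negate m : 0 < m rPlus -> m rZero = 0 -> m rOne = 1 ->
  exists m1, exec 4 41 m 29 m1 /\
    m1 rShift = - m rDist /\ m1 rPlus = 0 /\ (forall a, a <> rShift -> a <> rPlus -> m1 a = m a).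
Proof.
  intros H HZ HO. eexists. split; [jump; step1; step1; jump; apply exec_done|].
  split; [|split]; simpl_upd; try reflexivity.
  - rewrite HZ; ring.
  - intros a; intros; simpl_upd; reflexivity.
Qed.

Lemma exec_shift_next m : m rPlus <= 0 -> m rOne = 1 ->
  exists m1, exec 5 41 m 24 m1 /\
    m1 rPtr = m rPtr - m rStride /\ m1 rDist = m rDist + 1 /\ m1 rCount = m rCount - 1 /\
    (forall a, a <> rPtr -> a <> rDist -> a <> rCount -> m1 a = m a).
Proof.
  intros H HO. eexists. split; [no_jump; step1; step1; step1; jump; apply exec_done|].
  split; [|split; [|split]]; simpl_upd; try rewrite HO; try reflexivity.
  intros a; intros; simpl_upd; reflexivity.
Qed.

Lemma exec_row_head m : m rRow - m rN <= 0 -> m rZero = 0 -> m rOne = 1 ->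
  0 <= m rLocAddr -> 0 <= m rRadAddr -> 0 <= m rCell ->
  exists m1, exec 9 15 m 24 m1 /\
    m1 rLoc = m (m rLocAddr) /\ m1 rRad = m (m rRadAddr) /\ m1 rBest = m (m rCell) /\
    m1 rBestShift = 0 /\ m1 rPtr = m rCell /\ m1 rDist = 0 /\ m1 rCount = m rBudget + 1 /\
    (forall a, a <> rTmp -> a <> rLoc -> a <> rRad -> a <> rBest -> a <> rBestShift ->
       a <> rPtr -> a <> rDist -> a <> rCount -> m1 a = m a).
Proof.
  intros H HZ HO H1 H2 H3. eexists.
  split; [step1; no_jump; step1; step1; step1; step1; step1; step1; step1; apply exec_done|].
  repeat split; simpl_upd; try rewrite HZ; try rewrite HO; try ring.
  intros a; intros; simpl_upd; reflexivity.
Qed.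

Lemma exec_row_end m : m rOne = 1 -> 0 <= m rCell ->
  exists m1, exec 9 49 m 15 m1 /\
    m1 (m rCell + 2) = m rBest /\ m1 (m rCell + 3) = m rBestShift /\ m1 rCell = m rCell + 2 /\
    m1 rRow = m rRow + 1 /\ m1 rLocAddr = m rLocAddr + 1 /\ m1 rRadAddr = m rRadAddr + 1 /\
    (forall a, a <> m rCell + 2 -> a <> m rCell + 3 -> a <> rCell -> a <> rAddr -> a <> rRow ->
       a <> rLocAddr -> a <> rRadAddr -> m1 a = m a).
Proof.
  intros HO H. eexists.
  split; [step1; step1; step1; step1; step1; step1; step1; step1; jump; apply exec_done|].
  simpl_upd. rewrite HO. repeat split; simpl_upd; try ring.
  intros a; intros; simpl_upd; reflexivity.
Qed.

Lemma exec_next_column m : 0 <= m rCell -> 0 < m rL - m (m rCell) -> m rOne = 1 ->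
  exists m1, exec 6 58 m 11 m1 /\
    m1 rBudget = m rBudget + 1 /\ m1 rCol = m rCol + m rStride /\
    (forall a, a <> rVal -> a <> rTmp -> a <> rBudget -> a <> rCol -> m1 a = m a).
Proof.
  intros H1 H2 HO. eexists. split; [step1; step1; jump; step1; step1; jump; apply exec_done|].
  repeat split; simpl_upd; try rewrite HO; try ring.
  intros a; intros; simpl_upd; reflexivity.
Qed.

Lemma exec_stop m : 0 <= m rCell -> m rL - m (m rCell) <= 0 -> m rOne = 1 ->
  exists m1, exec 4 58 m 65 m1 /\ (forall a, a <> rVal -> a <> rTmp -> m1 a = m a).
Proof.
  intros H1 H2 HO. eexists. split; [step1; step1; no_jump; jump; apply exec_done|].
  intros a; intros; simpl_upd; reflexivity.
Qed.

Lemma exec_back_test m : 0 < m rRow -> 2 <= m rBack -> m rOne = 1 ->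
  exists m1, exec 6 70 m 77 m1 /\
    m1 rTmp = m (m rBack) - m (m rBack - 2) /\
    (forall a, a <> rVal -> a <> rAddr -> a <> rTmp -> m1 a = m a).
Proof.
  intros H1 H2 HO. eexists. split; [jump; step1; step1; step1; step1; step1; apply exec_done|].
  split; simpl_upd.
  - rewrite HO. replace (m rBack - 1 - 1) with (m rBack - 2) by ring. reflexivity.
  - intros a; intros; simpl_upd; reflexivity.
Qed.

Lemma exec_back_skip m : m rTmp <= 0 -> m rOne = 1 -> 0 <= m rLocAddr ->
  exists m1, exec 3 77 m 91 m1 /\
    m1 rPos = m (m rLocAddr) /\ (forall a, a <> rPos -> m1 a = m a).
Proof.
  intros H1 H2 H3. eexists. split; [no_jump; step1; jump; apply exec_done|].
  split; simpl_upd; [reflexivity|intros a; intros; simpl_upd; reflexivity].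
Qed.

Lemma exec_back_used m : 0 < m rTmp -> m rZero = 0 -> m rOne = 1 ->
  0 <= m rLocAddr -> 0 <= m rBack ->
  exists k m1, (k <= 7)%nat /\ exec k 77 m 86 m1 /\
    m1 rPos = m (m rLocAddr) + m (m rBack + 1) /\ m1 rShift = Z.abs (m (m rBack + 1)) /\
    (forall a, a <> rPos -> a <> rAddr -> a <> rShift -> m1 a = m a).
Proof.
  intros H1 HZ HO H3 H4.
  destruct (Z_lt_le_dec 0 (m (m rBack + m rOne))) as [Hp|Hn].
  - do 2 eexists. split; [|split].
    2:{ jump; step1; step1; step1; step1; jump; apply exec_done. }
    { lia. }
    simpl_upd. rewrite HO in *. split; [reflexivity|]. split; [rewrite Z.abs_eq; lia|].
    intros a; intros; simpl_upd; reflexivity.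
  - do 2 eexists. split; [|split].
    2:{ jump; step1; step1; step1; step1; no_jump; step1; apply exec_done. }
    { lia. }
    simpl_upd. rewrite HO in *. split; [reflexivity|]. split; [rewrite HZ, Z.abs_neq; lia|].
    intros a; intros; simpl_upd; reflexivity.
Qed.

Lemma exec_back_budget t m : m rShift = Z.of_nat t -> m rOne = 1 ->
  exists m1, exec (4 * t + 2) 86 m 91 m1 /\
    m1 rBack = m rBack - Z.of_nat t * m rStride /\
    (forall a, a <> rBack -> a <> rShift -> m1 a = m a).
Proof.
  revert m; induction t; intros m HD HO.
  - eexists. split; [no_jump; jump; apply exec_done|]. split; [lia|intros; reflexivity].
  - assert (S1 : exists m2, exec 4 86 m 86 m2 /\ m2 rShift = Z.of_nat t /\ m2 rOne = 1 /\
                   m2 rBack = m rBack - m rStride /\ m2 rStride = m rStride /\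
                   (forall a, a <> rBack -> a <> rShift -> m2 a = m a)).
    { eexists. split; [jump; step1; step1; jump; apply exec_done|].
      simpl_upd. repeat split; try lia. intros a; intros; simpl_upd; reflexivity. }
    destruct S1 as (m2 & S1 & A1 & A2 & A3 & A4 & F2).
    destruct (IHt m2 A1 A2) as (m3 & S3 & B3 & F3).
    exists m3. split.
    { replace (4 * S t + 2)%nat with (4 + (4 * t + 2))%nat by lia. eapply exec_trans; eauto. }
    split; [rewrite B3, A3, A4; lia|]. intros a H1 H2. rewrite F3, F2 by auto. reflexivity.
Qed.

Lemma exec_back_write m : m rOne = 1 -> 0 <= m rOutAddr ->
  exists m1, exec 7 91 m 70 m1 /\
    m1 (m rOutAddr) = m rPos /\ m1 rBack = m rBack - 2 /\ m1 rOutAddr = m rOutAddr - 1 /\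
    m1 rLocAddr = m rLocAddr - 1 /\ m1 rRow = m rRow - 1 /\
    (forall a, a <> m rOutAddr -> a <> rBack -> a <> rOutAddr -> a <> rLocAddr -> a <> rRow ->
       m1 a = m a).
Proof.
  intros HO H. eexists. split; [step1; step1; step1; step1; step1; step1; jump; apply exec_done|].
  simpl_upd. rewrite HO. repeat split; simpl_upd; try ring.
  intros a; intros; simpl_upd; reflexivity.
Qed.

Definition regs_const n L (m : mem) :=
  m rN = Z.of_nat n /\ m rL = L /\ m rStride = 2 * width n /\ m rOne = 1 /\ m rZero = 0.

Section Program.

Variables (n : nat) (L : Z) (x r : nat -> Z).

Definition heap_inv (m : mem) (idx : Z) :=
  (forall a, 0 <= a < table_base n -> m a = init_mem n L x r a) /\
  (forall j, 0 <= j < idx -> m (table_base n + 2 * j) = table_front n x r j /\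
                            m (table_base n + 2 * j + 1) = table_shift n x r j) /\
  (forall a, 0 <= a -> table_base n + 2 * idx <= a -> m a = 0).

Lemma heap_inv_ext m m' idx :
  (forall a, 0 <= a -> m' a = m a) -> heap_inv m idx -> heap_inv m' idx.
Proof.
  unfold heap_inv, table_base. intros E (H1 & H2 & H3). split; [|split].
  - intros a Ha. rewrite E by lia. auto.
  - intros j Hj. rewrite !E by lia. auto.
  - intros a Ha Ha'. rewrite E by lia. apply H3; lia.
Qed.

Definition col_inv (m : mem) (K : nat) :=
  regs_const n L m /\ heap_inv m (Z.of_nat K * width n) /\ m rBudget = Z.of_nat K /\
  m rCol = table_base n + 2 * (Z.of_nat K * width n).

Definition row_inv (m : mem) (K i : nat) :=
  regs_const n L m /\ heap_inv m (Z.of_nat K * width n + Z.of_nat i) /\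
  m rBudget = Z.of_nat K /\ m rCol = table_base n + 2 * (Z.of_nat K * width n) /\
  m rRow = Z.of_nat i /\ m rLocAddr = 1 + Z.of_nat i /\ m rRadAddr = 1 + Z.of_nat n + Z.of_nat i /\
  m rCell = table_base n + 2 * (Z.of_nat K * width n + Z.of_nat i - 1).

(* In the loop computing entry (K, i): the shifts of absolute value below e
   have been tried. *)
Definition shift_inv (m : mem) (K i e : nat) :=
  row_inv m K i /\ m rLoc = x (i - 1)%nat /\ m rRad = r (i - 1)%nat /\ m rDist = Z.of_nat e /\
  m rCount = Z.of_nat K + 1 - Z.of_nat e /\
  m rPtr = table_base n + 2 * ((Z.of_nat K - Z.of_nat e) * width n + Z.of_nat i - 1) /\
  (m rBest, m rBestShift) = scan (x (i - 1)%nat) (r (i - 1)%nat) (front x r (i - 1)) K e.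

Definition frame_row (m m' : mem) := forall a,
  (0 <= a \/ a = rN \/ a = rL \/ a = rStride \/ a = rOne \/ a = rZero \/ a = rBudget \/
   a = rCol \/ a = rRow \/ a = rLocAddr \/ a = rRadAddr \/ a = rCell) -> m' a = m a.

Definition frame_shift (m m' : mem) := forall a,
  (0 <= a \/ a = rN \/ a = rL \/ a = rStride \/ a = rOne \/ a = rZero \/ a = rBudget \/
   a = rCol \/ a = rRow \/ a = rLocAddr \/ a = rRadAddr \/ a = rCell \/ a = rLoc \/ a = rRad) ->
  m' a = m a.

Lemma row_inv_frame m m' K i : frame_row m m' -> row_inv m K i -> row_inv m' K i.
Proof.
  intros E (C & H & H1 & H2 & H3 & H4 & H5 & H6). destruct C as (C1 & C2 & C3 & C4 & C5).
  split; [repeat split; rewrite E by lia; assumption|].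
  split; [eapply heap_inv_ext; [|exact H]; intros a Ha; apply E; lia|].
  repeat split; rewrite E by lia; assumption.
Qed.

Lemma row_inv_frame_shift m m' K i : frame_shift m m' -> row_inv m K i -> row_inv m' K i.
Proof. intros E. apply row_inv_frame. intros a Ha. apply E. lia. Qed.

Lemma shift_inv_front m K i e : (1 <= i <= n)%nat -> (e <= K)%nat -> shift_inv m K i e ->
  m (m rPtr) = front x r (i - 1) (K - e).
Proof.
  intros Hi He ((_ & (_ & Htab & _) & _) & _ & _ & _ & _ & HP & _).
  assert (HW : 1 <= width n) by (unfold width; lia).
  rewrite HP.
  replace ((Z.of_nat K - Z.of_nat e) * width n + Z.of_nat i - 1)
    with (Z.of_nat (K - e) * width n + Z.of_nat (i - 1)) by (rewrite !Nat2Z.inj_sub by lia; ring).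
  assert (Z.of_nat (K - e) * width n <= Z.of_nat K * width n) by nia.
  rewrite (proj1 (Htab (Z.of_nat (K - e) * width n + Z.of_nat (i - 1)) ltac:(nia))).
  apply table_front_index. lia.
Qed.

Lemma exec_shift_body m K i e : (1 <= i <= n)%nat -> (e <= K)%nat -> shift_inv m K i e ->
  exists k m', (k <= 35)%nat /\ exec k 24 m 24 m' /\ shift_inv m' K i (S e) /\ frame_shift m m'.
Proof.
  intros Hi He Inv. pose proof (shift_inv_front m K i e Hi He Inv) as HF.
  destruct Inv as (RC & HXI & HRI & HE & HCNT & HP & HB).
  pose proof RC as (C & _). destruct C as (C1 & C2 & C3 & C4 & C5).
  destruct (exec_shift_load m ltac:(lia) C5) as (m1 & S1 & A1 & A2 & A3 & F1).
  destruct (exec_relax m1 ltac:(rewrite F1 by lia; auto) ltac:(rewrite F1 by lia; auto))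
    as (k2 & m2 & Hk2 & S2 & B2 & F2).
  destruct (exec_shift_negate m2 ltac:(rewrite F2 by lia; lia) ltac:(rewrite F2, F1 by lia; auto)
      ltac:(rewrite F2, F1 by lia; auto)) as (m3 & S3 & A3' & A4 & F3).
  destruct (exec_relax m3 ltac:(rewrite F3, F2, F1 by lia; auto)
      ltac:(rewrite F3, F2, F1 by lia; auto)) as (k4 & m4 & Hk4 & S4 & B4 & F4).
  destruct (exec_shift_next m4 ltac:(rewrite F4 by lia; lia)
      ltac:(rewrite F4, F3, F2, F1 by lia; auto))
    as (m5 & S5 & A5 & A6 & A7 & F5).
  assert (PE : frame_shift m m5) by (intros a Ha; rewrite F5, F4, F3, F2, F1 by lia; reflexivity).
  exists (4 + k2 + 4 + k4 + 5)%nat, m5. split; [lia|]. split.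
  { eapply exec_trans; [|exact S5]. eapply exec_trans; [|exact S4].
    eapply exec_trans; [|exact S3]. eapply exec_trans; [exact S1|exact S2]. }
  split; [|exact PE].
  split; [exact (row_inv_frame_shift m m5 K i PE RC)|].
  split; [rewrite <- HXI; apply PE; lia|]. split; [rewrite <- HRI; apply PE; lia|].
  split; [rewrite A6, F4, F3, F2, F1, HE by lia; lia|].
  split; [rewrite A7, F4, F3, F2, F1, HCNT by lia; lia|].
  split; [rewrite A5, !F4, !F3, !F2, !F1, HP, C3 by lia; unfold width; lia|].
  rewrite (F5 rBest), (F5 rBestShift) by lia. rewrite B4.
  rewrite (F3 rBest), (F3 rBestShift), (F3 rLoc), (F3 rRad), (F3 rFront), A3' by lia. rewrite B2.
  rewrite (F2 rDist), (F2 rLoc), (F2 rRad), (F2 rFront) by lia.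
  rewrite (F1 rDist), (F1 rLoc), (F1 rRad), (F1 rBest), (F1 rBestShift) by lia.
  rewrite A1, A2, HF, HE, HXI, HRI. simpl scan. rewrite <- HB. reflexivity.
Qed.

Lemma exec_shift_loop K i t e m : (1 <= i <= n)%nat -> t = (K + 1 - e)%nat -> (e <= K + 1)%nat ->
  shift_inv m K i e ->
  exists k m', (k <= 35 * t + 2)%nat /\ exec k 24 m 49 m' /\ row_inv m' K i /\
    (m' rBest, m' rBestShift) = dp x r i K /\ frame_shift m m'.
Proof.
  intros Hi. revert e m. induction t; intros e m Ht He Inv.
  - assert (e = K + 1)%nat by lia. subst e.
    destruct Inv as (RC & _ & _ & _ & HCNT & _ & HB).
    pose proof RC as (C & _). destruct C as (C1 & C2 & C3 & C4 & C5).
    exists 2%nat, m. split; [lia|]. split; [no_jump; jump; apply exec_done|].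
    split; [exact RC|]. split; [|intros a _; reflexivity]. rewrite HB.
    destruct i as [|i]; [lia|]. replace (K + 1)%nat with (S K) by lia.
    simpl. rewrite Nat.sub_0_r. reflexivity.
  - destruct (exec_shift_body m K i e Hi ltac:(lia) Inv) as (k1 & m1 & Hk1 & S1 & Inv1 & P1).
    destruct (IHt (S e) m1 ltac:(lia) ltac:(lia) Inv1) as (k2 & m2 & Hk2 & S2 & RC2 & B2 & P2).
    exists (k1 + k2)%nat, m2. split; [lia|]. split; [eapply exec_trans; eauto|].
    do 2 (split; [assumption|]). intros a Ha. rewrite P2, P1; auto.
Qed.

Lemma exec_row K i m : (1 <= i <= n)%nat -> row_inv m K i ->
  exists k m', (k <= 35 * (K + 1) + 20)%nat /\ exec k 15 m 15 m' /\ row_inv m' K (S i).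
Proof.
  intros Hi RC. pose proof RC as (C & HH & HK & HCOL & HI & HXA & HRA & HRP).
  destruct C as (C1 & C2 & C3 & C4 & C5).
  assert (HT : 2 <= table_base n) by (unfold table_base; lia).
  assert (HKW : 0 <= Z.of_nat K * width n) by (unfold width; nia).
  destruct (exec_row_head m ltac:(lia) C5 C4 ltac:(lia) ltac:(lia) ltac:(lia))
    as (m1 & S1 & A1 & A2 & A3 & A4 & A5 & A6 & A7 & F1).
  destruct HH as (H1 & H2 & H3).
  assert (Inv1 : shift_inv m1 K i 0).
  { split; [eapply row_inv_frame; [|exact RC]; intros a Ha; apply F1; lia|].
    split; [rewrite A1, HXA, H1 by (unfold table_base; lia); apply init_mem_x; lia|].
    split; [rewrite A2, HRA, H1 by (unfold table_base; lia); apply init_mem_r; lia|].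
    split; [exact A6|]. split; [rewrite A7, HK; lia|]. split; [rewrite A5, HRP; lia|].
    simpl. rewrite A3, A4, HRP.
    replace (Z.of_nat K * width n + Z.of_nat i - 1) with (Z.of_nat K * width n + Z.of_nat (i - 1))
      by lia.
    rewrite (proj1 (H2 (Z.of_nat K * width n + Z.of_nat (i - 1)) ltac:(lia))).
    rewrite table_front_index by lia. reflexivity. }
  destruct (exec_shift_loop K i (K + 1) 0 m1 Hi ltac:(lia) ltac:(lia) Inv1)
    as (k2 & m2 & Hk2 & S2 & RC2 & B2 & P2).
  pose proof RC2 as (C' & (G1 & G2 & G3) & HK2 & HCOL2 & HI2 & HXA2 & HRA2 & HRP2).
  destruct C' as (C1' & C2' & C3' & C4' & C5').
  destruct (exec_row_end m2 C4' ltac:(lia)) as (m3 & S3 & B3 & B3' & A8 & A9 & A10 & A11 & F3).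
  exists (9 + k2 + 9)%nat, m3. split; [lia|]. split.
  { eapply exec_trans; [|exact S3]. eapply exec_trans; [exact S1|exact S2]. }
  set (p := m2 rCell + 2) in *.
  assert (Hp : p = table_base n + 2 * (Z.of_nat K * width n + Z.of_nat i)) by (unfold p; lia).
  replace (m2 rCell + 3) with (p + 1) in * by (unfold p; lia).
  split; [repeat split; rewrite F3 by lia; assumption|].
  split.
  { split; [|split].
    - intros a Ha. rewrite F3 by lia. auto.
    - intros j Hj. destruct (Z.eq_dec j (Z.of_nat K * width n + Z.of_nat i)) as [->|Hne].
      + rewrite <- Hp, B3, B3', table_front_index, table_shift_index by lia.
        unfold front, shift. rewrite <- B2. split; reflexivity.
      + rewrite !F3 by lia. apply G2. lia.
    - intros a Ha Ha'. rewrite F3 by lia. apply G3; lia. }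
  repeat split; try rewrite F3 by lia; try assumption.
  - rewrite A9, HI2. lia.
  - rewrite A10, HXA2. lia.
  - rewrite A11, HRA2. lia.
  - rewrite A8. lia.
Qed.

Lemma exec_rows K t i m : t = (n + 1 - i)%nat -> (1 <= i <= n + 1)%nat -> row_inv m K i ->
  exists k m', (k <= t * (35 * (K + 1) + 20) + 2)%nat /\ exec k 15 m 58 m' /\
    row_inv m' K (n + 1).
Proof.
  revert i m. induction t; intros i m Ht Hi RC.
  - assert (i = n + 1)%nat by lia. subst i.
    pose proof RC as (C & _ & _ & _ & HI & _). destruct C as (C1 & C2 & C3 & C4 & C5).
    do 2 eexists. split; [|split]. 2:{ step1; jump. apply exec_done. }
    { lia. }
    eapply row_inv_frame; [|exact RC]. intros a Ha. simpl_upd. reflexivity.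
  - destruct (exec_row K i m ltac:(lia) RC) as (k1 & m1 & Hk1 & S1 & RC1).
    destruct (IHt (S i) m1 ltac:(lia) ltac:(lia) RC1) as (k2 & m2 & Hk2 & S2 & RC2).
    exists (k1 + k2)%nat, m2. split; [lia|]. split; [eapply exec_trans; eauto|exact RC2].
Qed.

Lemma exec_column_head K m : col_inv m K -> exists m1, exec 4 11 m 15 m1 /\ row_inv m1 K 1.
Proof.
  intros (C & (H1 & H2 & H3) & HK & HCOL). pose proof C as (C1 & C2 & C3 & C4 & C5).
  assert (HKW : 0 <= Z.of_nat K * width n) by (unfold width; nia).
  assert (HT : 2 <= table_base n) by (unfold table_base; lia).
  eexists. split; [step1; step1; step1; step1; apply exec_done|].
  split; [repeat split; simpl_upd; assumption|]. split.
  - split; [|split].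
    + intros a Ha. simpl_upd. auto.
    + intros j Hj. simpl_upd. destruct (Z.eq_dec j (Z.of_nat K * width n)) as [->|Hne].
      * replace (Z.of_nat K * width n) with (Z.of_nat K * width n + Z.of_nat 0) by lia.
        rewrite table_front_index, table_shift_index, !H3 by lia. split; reflexivity.
      * apply H2. lia.
    + intros a Ha Ha'. simpl_upd. apply H3; lia.
  - repeat split; simpl_upd; lia.
Qed.

Lemma exec_column K m : (1 <= n)%nat -> col_inv m K ->
  exists k m', (k <= n * (35 * (K + 1) + 20) + 6)%nat /\ exec k 11 m 58 m' /\
    row_inv m' K (n + 1).
Proof.
  intros Hn CI. destruct (exec_column_head K m CI) as (m1 & S1 & RC1).
  destruct (exec_rows K n 1 m1 ltac:(lia) ltac:(lia) RC1) as (k2 & m2 & Hk2 & S2 & RC2).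
  exists (4 + k2)%nat, m2. split; [nia|]. split; [eapply exec_trans; eauto|exact RC2].
Qed.

Lemma row_inv_front m K : row_inv m K (n + 1) -> m (m rCell) = front x r n K.
Proof.
  intros (_ & (_ & H2 & _) & _ & _ & _ & _ & _ & HRP).
  assert (HKW : 0 <= Z.of_nat K * width n) by (unfold width; nia).
  rewrite HRP.
  replace (Z.of_nat K * width n + Z.of_nat (n + 1) - 1) with (Z.of_nat K * width n + Z.of_nat n)
    by lia.
  rewrite (proj1 (H2 (Z.of_nat K * width n + Z.of_nat n) ltac:(lia))).
  apply table_front_index. lia.
Qed.

Definition column_cost (n K : nat) : nat := (n * (35 * (K + 1) + 20) + 12)%nat.

Lemma exec_columns c0 t K m : (1 <= n)%nat -> L <= front x r n c0 ->
  t = (c0 - K)%nat -> (K <= c0)%nat -> col_inv m K ->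
  exists k m' Kf, (K <= Kf <= c0)%nat /\ L <= front x r n Kf /\
    (forall K', (K <= K' < Kf)%nat -> front x r n K' < L) /\
    (k <= (Kf + 1 - K) * column_cost n Kf)%nat /\ exec k 11 m 65 m' /\ row_inv m' Kf (n + 1).
Proof.
  intros Hn Hc0. revert K m. induction t; intros K m Ht HK CI;
    destruct (exec_column K m Hn CI) as (k1 & m1 & Hk1 & S1 & RC1);
    pose proof (row_inv_front _ _ RC1) as Top;
    pose proof RC1 as (C & HH & HK1 & HCOL1 & _ & _ & _ & HRP);
    destruct C as (C1 & C2 & C3 & C4 & C5);
    assert (Hcell : 0 <= m1 rCell) by (rewrite HRP; unfold table_base, width; nia);
    destruct (Z_le_gt_dec L (front x r n K)) as [Hs|Hg].
  1,3:
    destruct (exec_stop m1 Hcell ltac:(rewrite Top, C2; lia) C4) as (m2 & S2 & F2);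
    exists (k1 + 4)%nat, m2, K; split; [lia|]; split; [exact Hs|]; split; [intros; lia|];
    split; [unfold column_cost; nia|]; split; [eapply exec_trans; eauto|];
    eapply row_inv_frame; [|exact RC1]; intros a Ha; apply F2; lia.
  - replace K with c0 in Hg by lia. lia.
  - destruct (exec_next_column m1 Hcell ltac:(rewrite Top, C2; lia) C4) as (m2 & S2 & A1 & A2 & F2).
    assert (CI2 : col_inv m2 (S K)).
    { split; [repeat split; rewrite F2 by lia; assumption|].
      split.
      - eapply heap_inv_ext; [intros a Ha; apply F2; lia|].
        replace (Z.of_nat (S K) * width n) with (Z.of_nat K * width n + Z.of_nat (n + 1))
          by (unfold width; lia). exact HH.
      - split; [rewrite A1, HK1; lia|]. rewrite A2, HCOL1, C3. unfold width; lia. }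
    destruct (IHt (S K) m2 ltac:(lia) ltac:(lia) CI2)
      as (k3 & m3 & Kf & HKf & HL & Hbelow & Hk3 & S3 & RC3).
    exists (k1 + 6 + k3)%nat, m3, Kf. split; [lia|]. split; [exact HL|]. split.
    { intros K' HK'. destruct (Nat.eq_dec K' K) as [->|]; [lia|]. apply Hbelow; lia. }
    split.
    { assert (column_cost n K <= column_cost n Kf)%nat by (unfold column_cost; nia).
      unfold column_cost in *. nia. }
    split; [|exact RC3]. eapply exec_trans; [eapply exec_trans; [exact S1|exact S2]|exact S3].
Qed.

(* Reading back from entry (c, i): outputs i .. n-1 are written, and the
   placement of the first i sensors with budget c agrees with the final one. *)
Definition back_inv (Kf : nat) (m : mem) (i c : nat) :=
  regs_const n L m /\ (forall a, 0 <= a < 2 + 2 * Z.of_nat n -> m a = init_mem n L x r a) /\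
  (forall j, 0 <= j < Z.of_nat Kf * width n + Z.of_nat n + 1 ->
     m (table_base n + 2 * j) = table_front n x r j /\
     m (table_base n + 2 * j + 1) = table_shift n x r j) /\
  (forall j, (i <= j < n)%nat -> m (2 + 2 * Z.of_nat n + Z.of_nat j) = place x r n Kf j) /\
  m rRow = Z.of_nat i /\ m rBack = table_base n + 2 * (Z.of_nat c * width n + Z.of_nat i) /\
  m rOutAddr = 1 + 2 * Z.of_nat n + Z.of_nat i /\ m rLocAddr = 1 + Z.of_nat i /\
  (c <= Kf)%nat /\ (i <= n)%nat /\
  (forall j, (j < i)%nat -> place x r n Kf j = place x r i c j).

Lemma back_inv_reads Kf m i c : back_inv Kf m (S i) c ->
  m (m rBack) = front x r (S i) c /\ m (m rBack - 2) = front x r i c /\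
  m (m rBack + 1) = shift x r (S i) c /\ m (m rLocAddr) = x i.
Proof.
  intros (_ & Hin & Htab & _ & _ & HQ & _ & HXA & Hc & Hin2 & _).
  assert (HcW : 0 <= Z.of_nat c * width n <= Z.of_nat Kf * width n) by (unfold width; nia).
  rewrite HQ. repeat split.
  - rewrite (proj1 (Htab (Z.of_nat c * width n + Z.of_nat (S i)) ltac:(lia))).
    apply table_front_index; lia.
  - replace (table_base n + 2 * (Z.of_nat c * width n + Z.of_nat (S i)) - 2)
      with (table_base n + 2 * (Z.of_nat c * width n + Z.of_nat i)) by lia.
    rewrite (proj1 (Htab (Z.of_nat c * width n + Z.of_nat i) ltac:(lia))).
    apply table_front_index; lia.
  - rewrite (proj2 (Htab (Z.of_nat c * width n + Z.of_nat (S i)) ltac:(lia))).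
    apply table_shift_index; lia.
  - rewrite HXA, Hin by (unfold table_base in *; lia).
    replace i with (S i - 1)%nat at 2 by lia. apply init_mem_x; lia.
Qed.

Definition frame_back (m m' : mem) := forall a,
  (0 <= a \/ a = rN \/ a = rL \/ a = rStride \/ a = rOne \/ a = rZero \/ a = rRow \/
   a = rLocAddr \/ a = rOutAddr) -> m' a = m a.

Lemma exec_back_write_inv Kf m m2 i c c' :
  back_inv Kf m (S i) c -> frame_back m m2 -> (c' <= c)%nat ->
  m2 rPos = place x r (S i) c i ->
  m2 rBack = table_base n + 2 * (Z.of_nat c' * width n + Z.of_nat i) + 2 ->
  (forall j, (j < i)%nat -> place x r (S i) c j = place x r i c' j) ->
  exists m3, exec 7 91 m2 70 m3 /\ back_inv Kf m3 i c'.
Proof.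
  intros (C & Hin & Htab & Hout & HI & HQ & HOA & HXA & Hc & Hin2 & Hcons) Fr Hc' Hy HQ2 Hpl.
  pose proof C as (C1 & C2 & C3 & C4 & C5).
  assert (HOA2 : m2 rOutAddr = 1 + 2 * Z.of_nat n + Z.of_nat (S i))
    by (rewrite Fr by lia; exact HOA).
  destruct (exec_back_write m2 ltac:(rewrite Fr by lia; exact C4) ltac:(lia))
    as (m3 & S3 & B1 & B2 & B3 & B4 & B5 & F3).
  rewrite HOA2 in B1, F3.
  assert (HT : table_base n = 3 * Z.of_nat n + 2) by reflexivity.
  exists m3. split; [exact S3|].
  split; [repeat split; rewrite F3, Fr by lia; assumption|].
  split; [intros a Ha; rewrite F3, Fr by lia; auto|].
  split; [intros j Hj; rewrite !F3, !Fr by lia; auto|].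
  split.
  { intros j Hj. destruct (Nat.eq_dec j i) as [->|Hne].
    - replace (2 + 2 * Z.of_nat n + Z.of_nat i) with (1 + 2 * Z.of_nat n + Z.of_nat (S i)) by lia.
      rewrite B1, Hy. symmetry. apply Hcons. lia.
    - rewrite F3, Fr by lia. apply Hout. lia. }
  split; [rewrite B5, Fr, HI by lia; lia|].
  split; [rewrite B2, HQ2; lia|].
  split; [rewrite B3, HOA2; lia|].
  split; [rewrite B4, Fr, HXA by lia; lia|].
  do 2 (split; [lia|]).
  intros j Hj. rewrite Hcons, Hpl by lia. reflexivity.
Qed.

Lemma exec_back_step Kf m i c : back_inv Kf m (S i) c ->
  exists k m' c', (c' <= c)%nat /\ (k <= 22 + 4 * (c - c'))%nat /\ exec k 70 m 70 m' /\
    back_inv Kf m' i c'.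
Proof.
  intros BI. pose proof BI as (C & _ & _ & _ & HI & HQ & _ & HXA & _ & _ & _).
  pose proof C as (C1 & C2 & C3 & C4 & C5).
  destruct (back_inv_reads Kf m i c BI) as (EV & ET & ED & EX).
  assert (HT : 2 <= table_base n) by (unfold table_base; lia).
  assert (HcW : 0 <= Z.of_nat c * width n) by (unfold width; nia).
  destruct (exec_back_test m ltac:(lia) ltac:(lia) C4) as (m1 & S1 & A1 & F1).
  pose proof (front_le_S x r i c).
  destruct (Z.eq_dec (front x r (S i) c) (front x r i c)) as [E|NE].
  - destruct (exec_back_skip m1 ltac:(rewrite A1, EV, ET; lia) ltac:(rewrite F1 by lia; auto)
      ltac:(rewrite F1 by lia; lia)) as (m2 & S2 & A2 & F2).
    destruct (exec_back_write_inv Kf m m2 i c c BI) as (m3 & S3 & BI3).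
    + intros a Ha. rewrite F2, F1 by lia. reflexivity.
    + lia.
    + rewrite A2, (F1 rLocAddr), (F1 (m rLocAddr)), EX by lia.
      rewrite (place_S_unused x r i c E), place_ge by lia. reflexivity.
    + rewrite F2, F1, HQ by lia. lia.
    + intros j Hj. rewrite place_S_unused by exact E. reflexivity.
    + exists (6 + 3 + 7)%nat, m3, c. split; [lia|]. split; [lia|]. split; [|exact BI3].
      eapply exec_trans; [eapply exec_trans; [exact S1|exact S2]|exact S3].
  - destruct (front_S_witness x r i c NE) as (Hd & _ & _).
    set (d := shift x r (S i) c) in *.
    destruct (exec_back_used m1 ltac:(rewrite A1, EV, ET; lia) ltac:(rewrite F1 by lia; auto)
      ltac:(rewrite F1 by lia; auto) ltac:(rewrite F1 by lia; lia) ltac:(rewrite F1 by lia; lia))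
      as (k2 & m2 & Hk2 & S2 & A2 & A3 & F2).
    rewrite !(F1 rLocAddr), !(F1 rBack), (F1 (m rLocAddr)), (F1 (m rBack + 1)), EX, ED in * by lia.
    destruct (exec_back_budget (Z.abs_nat d) m2 ltac:(rewrite A3; lia)
      ltac:(rewrite F2, F1 by lia; auto)) as (m3 & S3 & A4 & F3).
    destruct (exec_back_write_inv Kf m m3 i c (c - Z.abs_nat d) BI) as (m4 & S4 & BI4).
    + intros a Ha. rewrite F3, F2, F1 by lia. reflexivity.
    + lia.
    + rewrite F3, A2 by lia. rewrite place_S_used by exact NE.
      destruct (Nat.eq_dec i i); [reflexivity|congruence].
    + rewrite A4, (F2 rBack), (F1 rBack), (F2 rStride), (F1 rStride), HQ, C3 by lia.
      rewrite Nat2Z.inj_sub by lia. lia.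
    + intros j Hj. rewrite place_S_used by exact NE. destruct (Nat.eq_dec j i); [lia|reflexivity].
    + exists (6 + k2 + (4 * Z.abs_nat d + 2) + 7)%nat, m4, (c - Z.abs_nat d)%nat.
      split; [lia|]. split; [lia|]. split; [|exact BI4].
      eapply exec_trans; [eapply exec_trans; [eapply exec_trans; [exact S1|exact S2]|exact S3]|].
      exact S4.
Qed.

Lemma exec_back_loop Kf i m c : back_inv Kf m i c ->
  exists k m', (k <= 22 * i + 4 * c + 1)%nat /\ exec k 70 m 71 m' /\
    (forall j, (j < n)%nat -> m' (2 + 2 * Z.of_nat n + Z.of_nat j) = place x r n Kf j) /\
    step prog 71 m' = None.
Proof.
  revert m c. induction i; intros m c BI.
  - pose proof BI as (_ & _ & _ & Hout & HI & _).
    exists 1%nat, m. split; [lia|]. split; [no_jump; apply exec_done|].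
    split; [intros j Hj; apply Hout; lia|reflexivity].
  - destruct (exec_back_step Kf m i c BI) as (k1 & m1 & c' & Hc' & Hk1 & S1 & BI1).
    destruct (IHi m1 c' BI1) as (k2 & m2 & Hk2 & S2 & Out & Halt).
    exists (k1 + k2)%nat, m2. split; [lia|]. split; [eapply exec_trans; eauto|auto].
Qed.

Lemma exec_back_init Kf m : row_inv m Kf (n + 1) ->
  exists m1, exec 5 65 m 70 m1 /\ back_inv Kf m1 n Kf.
Proof.
  intros (C & (H1 & H2 & H3) & HK & HCOL & HI & HXA & HRA & HRP).
  pose proof C as (C1 & C2 & C3 & C4 & C5).
  assert (HT : table_base n = 3 * Z.of_nat n + 2) by reflexivity.
  assert (HW : width n = Z.of_nat n + 1) by reflexivity.
  eexists. split; [step1; step1; step1; step1; step1; apply exec_done|].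
  split; [repeat split; simpl_upd; assumption|].
  split; [intros a Ha; simpl_upd; apply H1; lia|].
  split; [intros j Hj; simpl_upd; apply H2; lia|].
  split; [intros j Hj; lia|].
  repeat split; simpl_upd; lia.
Qed.

Lemma exec_init : exists m1, exec 11 0 (init_mem n L x r) 11 m1 /\ col_inv m1 0.
Proof.
  assert (HT : table_base n = 3 * Z.of_nat n + 2) by reflexivity.
  assert (HW : width n = Z.of_nat n + 1) by reflexivity.
  assert (I0 : init_mem n L x r 0 = Z.of_nat n) by reflexivity.
  assert (I1 : init_mem n L x r 1 = L) by reflexivity.
  eexists.
  split; [step1; step1; step1; step1; step1; step1; step1; step1; step1; step1; step1;
          apply exec_done|].
  simpl_upd. rewrite I0, I1.
  split; [repeat split; simpl_upd; try rewrite I0; try rewrite I1; try reflexivity; lia|].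
  split.
  { split; [|split].
    - intros a Ha. simpl_upd. reflexivity.
    - intros j Hj. lia.
    - intros a Ha Ha'. simpl_upd. apply init_mem_high. lia. }
  split; simpl_upd; [reflexivity|]. rewrite HT. simpl Z.of_nat. lia.
Qed.

Lemma run_prog c0 : (1 <= n)%nat -> L <= front x r n c0 ->
  exists fuel m K, run prog fuel 0 (init_mem n L x r) = Some m /\
    (forall j, (j < n)%nat -> m (2 + 2 * Z.of_nat n + Z.of_nat j) = place x r n K j) /\
    L <= front x r n K /\ (forall K', (K' < K)%nat -> front x r n K' < L) /\
    (fuel <= 200 * (K * K * n + n + 1))%nat.
Proof.
  intros Hn Hc0.
  destruct exec_init as (m1 & S1 & CI1).
  destruct (exec_columns c0 c0 0 m1 Hn Hc0 ltac:(lia) ltac:(lia) CI1)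
    as (k2 & m2 & K & HK & HLK & Hbelow & Hk2 & S2 & RC2).
  destruct (exec_back_init K m2 RC2) as (m3 & S3 & BI3).
  destruct (exec_back_loop K n m3 K BI3) as (k4 & m4 & Hk4 & S4 & Out & Halt).
  exists (11 + k2 + 5 + k4)%nat, m4, K. split.
  { eapply exec_run; [|exact Halt|reflexivity].
    eapply exec_trans; [eapply exec_trans; [eapply exec_trans|]|]; eauto. }
  split; [exact Out|]. split; [exact HLK|]. split; [intros K' HK'; apply Hbelow; lia|].
  unfold column_cost in Hk2. nia.
Qed.

End Program.

Open Scope R_scope.

Lemma fuel_bound (fuel K n : nat) (C : R) :
  (fuel <= 200 * (K * K * n + n + 1))%nat -> INR K <= C ->
  INR fuel <= 200 * (C ^ 2 * INR n + INR n + 1).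
Proof.
  intros Hf HK. apply le_INR in Hf.
  rewrite mult_INR, !plus_INR, !mult_INR, (INR_IZR_INZ 200) in Hf. simpl (IZR (Z.of_nat 200)) in Hf.
  pose proof (pos_INR K). pose proof (pos_INR n).
  assert (INR K * INR K * INR n <= C ^ 2 * INR n) by (apply Rmult_le_compat_r; nra).
  simpl (INR 1) in Hf. lra.
Qed.

Theorem mainTheorem7 :
  exists (P : list instr) (c : R), 0 <= c /\
    forall (n : nat) (L : Z) (x r : nat -> Z),
      (0 < L)%Z ->
      (forall i j, (i <= j < n)%nat -> (x i <= x j)%Z) ->
      (exists y, feasible n (IZR L) (fun i => IZR (r i)) y /\
                 order_preserving n (IZR L) (fun i => IZR (r i)) y) ->
      exists (fuel : nat) (m : mem),
        run P fuel 0 (init_mem n L x r) = Some m /\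
        let y := output n m in
        feasible n (IZR L) (fun i => IZR (r i)) y /\
        order_preserving n (IZR L) (fun i => IZR (r i)) y /\
        (forall y', feasible n (IZR L) (fun i => IZR (r i)) y' ->
                    order_preserving n (IZR L) (fun i => IZR (r i)) y' ->
                    cost n (fun i => IZR (x i)) y <= cost n (fun i => IZR (x i)) y') /\
        INR fuel <= c * ((cost n (fun i => IZR (x i)) y) ^ 2 * INR n + INR n + 1).
Proof.
  exists prog, 200. split; [lra|].
  intros n L x r HL _ (y0 & Hf0 & Hop0).
  pose proof (feasible_pos r n L HL y0 Hf0) as Hn.
  destruct (order_preserving_front_reaches x r n L y0 Hop0) as (c0 & _ & Hc0).
  destruct (run_prog n L x r c0 Hn Hc0) as (fuel & m & K & Hrun & Hout & HK & Hmin & Hfuel).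
  exists fuel, m. split; [exact Hrun|]. intros y.
  assert (Ey : forall j, (j < n)%nat -> IZR (place x r n K j) = y j)
    by (intros j Hj; unfold y, output; rewrite Hout by exact Hj; reflexivity).
  destruct (place_solution x r n L HL K HK) as (Hf & Hop & Hc).
  assert (Ec : cost n (fun i => IZR (x i)) y =
               cost n (fun i => IZR (x i)) (fun j => IZR (place x r n K j)))
    by (symmetry; apply cost_upto_ext, Ey).
  pose proof (budget_le_cost x r n L K _ Hmin Hop) as HKc.
  split; [exact (feasible_ext _ _ _ _ _ Ey Hf)|].
  split; [exact (order_preserving_ext _ _ _ _ _ Ey Hop)|].
  rewrite Ec. split; [|exact (fuel_bound fuel K n _ Hfuel HKc)].
  intros y' _ Hy'. pose proof (budget_le_cost x r n L K y' Hmin Hy'). lra.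
Qed.
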